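(* Let $n\geq1$. For all $a,r\in\mathbb N$ and all $l\in\mathbb N$ with $l\leq n$, $$\sum_{i=0}^l(-1)^i\binom{l}{i}\sum_{j=0}^{n-l+1}(-1)^{n-l+1+j}\binom{n-l+1}{j}\overline{(a+r+j,\,r+i+j)}=\bar0.$$
   Context: $\Lambda_{2,n}=\{\alpha\in\mathbb N^2:1\leq\alpha_1+\alpha_2\leq n\}$, $\lambda_{2,n}=|\Lambda_{2,n}|$, and for $v\in\mathbb N^2$, $\bar v=\big(\binom{v_1}{\alpha_1}\binom{v_2}{\alpha_2}\big)_{\alpha\in\Lambda_{2,n}}\in\mathbb C^{\lambda_{2,n}}$; $\bar0$ is the zero vector. *)

From HB Require Import structures.
From mathcomp Require Import all_boot all_order all_algebra algC.
Set Implicit Arguments. Unset Strict Implicit. Unset Printing Implicit Defensive.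
Import Order.TTheory GRing.Theory Num.Theory.
Local Open Scope ring_scope.

(* Lambda_{2,n} = { alpha in N^2 : 1 <= alpha_1 + alpha_2 <= n }, as a finite type
   (components are automatically <= n, so we take them in 'I_n.+1). *)
Definition Lambda2 (n : nat) :=
  {alpha : 'I_n.+1 * 'I_n.+1 | (1 <= alpha.1 + alpha.2 <= n)%N}.

Definition lambda2 (n : nat) : nat := #|{: Lambda2 n}|.

Definition vbar (n : nat) (v : nat * nat) : 'rV[algC]_(lambda2 n) :=
  \row_(k < lambda2 n)
     let alpha := val (@enum_val (Lambda2 n) predT k) in
     ('C(v.1, alpha.1) * 'C(v.2, alpha.2))%:R.

From HB Require Import structures.
From mathcomp Require Import all_boot all_order all_algebra algC.
From mathcomp Require Import ring zify.
Set Implicit Arguments. Unset Strict Implicit.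
Import GRing.Theory Num.Theory.
Local Open Scope ring_scope.

(* Up to the sign (-1)^l, coordinate (p, q) of the vector is the mixed finite
   difference (Delta_i)^l (Delta_j)^m, m = n - l + 1, at (0, 0) of
   h(i, j) = C(a + r + j, p) C(r + i + j, q), a polynomial of total degree
   p + q <= n < l + m.  Vandermonde's identity splits h into the separable terms
   C(i, s) * C(a + r + j, p) C(r + j, q - s), and each of them is annihilated
   either by (Delta_i)^l (when s < l) or by (Delta_j)^m (when p + q - s < m). *)

Section FiniteDifferences.

Context {R : pzRingType}.
Implicit Types (f g : nat -> R) (c : R).

Definition fdiff f j := f j.+1 - f j.

Definition deg_le d f := forall j, iter d.+1 fdiff f j = 0.

Lemma eq_iter_fdiff k f g : f =1 g -> iter k fdiff f =1 iter k fdiff g.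
Proof. by move=> eq_fg; elim: k => //= k IHk j; rewrite /fdiff !IHk. Qed.

Lemma iter_fdiff_shift k f j :
  iter k fdiff (fun i => f i.+1) j = iter k fdiff f j.+1.
Proof. by elim: k j => //= k IHk j; rewrite /fdiff !IHk. Qed.

Lemma iter_fdiffD k f g j :
  iter k fdiff (fun i => f i + g i) j = iter k fdiff f j + iter k fdiff g j.
Proof. by elim: k j => //= k IHk j; rewrite /fdiff !IHk opprD addrACA. Qed.

Lemma iter_fdiffMl k c f j :
  iter k fdiff (fun i => c * f i) j = c * iter k fdiff f j.
Proof. by elim: k j => //= k IHk j; rewrite /fdiff !IHk mulrBr. Qed.

Lemma iter_fdiffMr k f c j :
  iter k fdiff (fun i => f i * c) j = iter k fdiff f j * c.
Proof. by elim: k j => //= k IHk j; rewrite /fdiff !IHk mulrBl. Qed.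

Lemma iter_fdiff0 k j : iter k fdiff (fun=> 0) j = 0.
Proof. by elim: k j => //= k IHk j; rewrite /fdiff !IHk subrr. Qed.

Lemma iter_fdiffE k f j :
  iter k fdiff f j =
    \sum_(i < k.+1) (-1) ^+ (k + i) * 'C(k, i)%:R * f (j + i)%N.
Proof.
elim: k j => [|k IHk] j /=.
  by rewrite big_ord1 /= !addn0 expr0 !mul1r.
rewrite /fdiff !IHk [RHS]big_ord_recl.
(* Pascal's rule splits the right-hand side into the two order-k expansions. *)
under [X in _ = _ + X]eq_bigr => i _ do rewrite /= binS natrD mulrDr mulrDl.
rewrite big_split /= addrA [RHS]addrC; congr (_ + _).
  apply: eq_bigr => i _.
  by rewrite /bump add1n addSn !addnS !exprS !mulN1r opprK.
rewrite [in LHS]big_ord_recl [in RHS]big_ord_recr /= (@bin_small k k.+1) //.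
rewrite mulr0n mulr0 mul0r addr0 opprD.
congr (_ + _); last first.
  rewrite -sumrN; apply: eq_bigr => i _.
  by rewrite /bump add1n addSn !addnS !exprS !mulN1r !mulNr !opprK.
by rewrite addSn exprS !bin0 mulN1r !mulNr.
Qed.

Lemma deg_leS d f : deg_le d.+1 f <-> deg_le d (fdiff f).
Proof. by rewrite /deg_le iterSr. Qed.

Lemma eq_deg_le d f g : f =1 g -> deg_le d f -> deg_le d g.
Proof. by move=> eq_fg fd j; rewrite -(eq_iter_fdiff _ eq_fg). Qed.

Lemma deg_le0 f : deg_le 0 f -> forall j, f j = f 0.
Proof.
by move=> f0; elim=> // j <-; apply/eqP; rewrite -subr_eq0 [_ - _]f0.
Qed.

Lemma deg_le_shift d f : deg_le d f -> deg_le d (fun j => f j.+1).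
Proof. by move=> fd j; rewrite iter_fdiff_shift. Qed.

Lemma deg_leD d f g : deg_le d f -> deg_le d g -> deg_le d (fun j => f j + g j).
Proof. by move=> fd gd j; rewrite iter_fdiffD fd gd addr0. Qed.

Lemma deg_leMl d c f : deg_le d f -> deg_le d (fun j => c * f j).
Proof. by move=> fd j; rewrite iter_fdiffMl fd mulr0. Qed.

Lemma deg_leMr d f c : deg_le d f -> deg_le d (fun j => f j * c).
Proof. by move=> fd j; rewrite iter_fdiffMr fd mul0r. Qed.

Lemma deg_leM a b f g :
  deg_le a f -> deg_le b g -> deg_le (a + b) (fun j => f j * g j).
Proof.
elim: a b f g => [|a IHa] b f g fa gb.
  by apply: (eq_deg_le _ (deg_leMl (f 0) gb)) => j; rewrite (deg_le0 fa j).
elim: b f g fa gb => [|b IHb] f g fa gb.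
  rewrite addn0; apply: (eq_deg_le _ (deg_leMr (g 0) fa)) => j.
  by rewrite (deg_le0 gb j).
have leibniz : (fun j => f j.+1 * fdiff g j + fdiff f j * g j)
    =1 fdiff (fun j => f j * g j).
  by move=> j; rewrite /fdiff mulrBr mulrBl addrA subrK.
rewrite addnS; apply/deg_leS/(eq_deg_le leibniz)/deg_leD.
  exact/IHb/deg_leS/gb/deg_le_shift.
by rewrite addSnnS; apply/IHa/gb/deg_leS.
Qed.

Lemma iter_fdiff_deg_le d k f j :
  deg_le d f -> (d < k)%N -> iter k fdiff f j = 0.
Proof.
by move=> fd /subnK <-; rewrite iterD (eq_iter_fdiff _ fd) iter_fdiff0.
Qed.

Lemma deg_le_binomial p x : deg_le p (fun j => 'C(x + j, p)%:R).
Proof.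
elim: p => [|p IHp]; first by move=> j; rewrite /= /fdiff !bin0 subrr.
apply/deg_leS; apply: (eq_deg_le _ IHp) => j.
by rewrite /fdiff addnS binS natrD addrAC subrr add0r.
Qed.

End FiniteDifferences.

Section MixedDifferences.

Context {R : comPzRingType}.

Lemma mixed_fdiff_separable l m t (F G : nat -> nat -> R) :
  \sum_(i < l.+1) (-1) ^+ (l + i) * 'C(l, i)%:R *
    \sum_(j < m.+1) (-1) ^+ (m + j) * 'C(m, j)%:R * \sum_(s < t) F s i * G s j
  = \sum_(s < t) iter l fdiff (F s) 0 * iter m fdiff (G s) 0.
Proof.
under [RHS]eq_bigr => s _ do rewrite !iter_fdiffE big_distrlr /=.
rewrite exchange_big; apply: eq_bigr => i _ /=.
rewrite mulr_sumr exchange_big; apply: eq_bigr => j _ /=.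
rewrite !mulr_sumr; apply: eq_bigr => s _ /=.
by rewrite !add0n; ring.
Qed.

Lemma deg_le_binomialM x y p q :
  deg_le (p + q) (fun j => ('C(x + j, p) * 'C(y + j, q))%:R : R).
Proof.
have Cxy := deg_leM (deg_le_binomial (R := R) p x) (deg_le_binomial q y).
by apply: (eq_deg_le _ Cxy) => j; rewrite natrM.
Qed.

Lemma mixed_fdiff_binomialM x y p q l m : (p + q < l + m)%N ->
  \sum_(i < l.+1) (-1) ^+ (l + i) * 'C(l, i)%:R *
    \sum_(j < m.+1) (-1) ^+ (m + j) * 'C(m, j)%:R *
      ('C(x + j, p) * 'C(y + i + j, q))%:R = 0 :> R.
Proof.
move=> deg_lt.
have vandermonde i j : ('C(x + j, p) * 'C(y + i + j, q))%:R
    = \sum_(s < q.+1) 'C(i, s)%:R * ('C(x + j, p) * 'C(y + j, q - s))%:R :> R.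
  rewrite -addnA addnCA -(binomial.Vandermonde i (y + j) q).
  rewrite natrM natr_sum mulr_sumr.
  by apply: eq_bigr => s _; rewrite !natrM mulrCA.
under eq_bigr => i _ do under eq_bigr => j _ do rewrite vandermonde.
rewrite (mixed_fdiff_separable _ _ _ (fun s i => 'C(i, s)%:R)
          (fun s j => ('C(x + j, p) * 'C(y + j, q - s))%:R)).
rewrite big1 // => s _.
have [lt_s_l | le_l_s] := ltnP s l.
  by rewrite (iter_fdiff_deg_le _ (deg_le_binomial s 0)) ?mul0r.
rewrite (iter_fdiff_deg_le _ (deg_le_binomialM x y p (q - s))) ?mulr0 //.
by have := ltn_ord s; lia.
Qed.

End MixedDifferences.

Theorem lemma2p12 (n : nat) : (1 <= n)%N ->
  forall a r l : nat, (l <= n)%N ->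
  \sum_(i < l.+1)
     ((-1) ^+ i * ('C(l, i))%:R) *:
       \sum_(j < (n - l + 1).+1)
          ((-1) ^+ (n - l + 1 + j) * ('C(n - l + 1, j))%:R) *:
            vbar n (a + r + j, r + i + j)%N
  = 0 :> 'rV[algC]_(lambda2 n).
Proof.
move=> _ a r l le_l_n; apply/rowP => k; rewrite !mxE summxE.
under eq_bigr => i _ do rewrite mxE summxE.
under eq_bigr => i _ do under eq_bigr => j _ do rewrite !mxE.
case: (enum_val k) => [[p q] /= /andP[_ le_pq_n]].
set m := (n - l + 1)%N.
transitivity ((-1) ^+ l * \sum_(i < l.+1) (-1) ^+ (l + i) * 'C(l, i)%:R *
  \sum_(j < m.+1) (-1) ^+ (m + j) * 'C(m, j)%:R *
    ('C(a + r + j, p) * 'C(r + i + j, q))%:R :> algC).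
  rewrite mulr_sumr; apply: eq_bigr => i _.
  by rewrite exprD !mulrA -expr2 sqrr_sign mul1r.
by rewrite mixed_fdiff_binomialM ?mulr0 //; lia.
Qed.
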